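(* Let $r\ge3$ be odd. For any $n\ge r-1$ and $A>0$, there exists $f\in C^r[-1,1]$, identically $0$ on $[-1,-1/2]$ and nonnegative on $[-1,1]$, such that every algebraic polynomial $P_n$ of degree $\le n$ which is nonnegative on $[-1/2,1/2]$ and satisfies $P_n^{(i)}(0)=f^{(i)}(0)$ for $0\le i\le r-1$ obeys $$\|f-P_n\|>A\,\|f^{(r)}\|.$$
   Context: $\|\cdot\|$ is the sup norm on $[-1,1]$. *)

From HB Require Import structures.
From mathcomp Require Import all_boot all_order all_algebra.
From mathcomp Require Import all_classical all_reals all_analysis.
Set Implicit Arguments. Unset Strict Implicit. Unset Printing Implicit Defensive.
Import Order.TTheory GRing.Theory Num.Theory.
Import numFieldNormedType.Exports.
Local Open Scope classical_set_scope.
Local Open Scope ring_scope.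

Definition supnorm {R : realType} (g : R -> R) : R :=
  sup [set `|g x| | x in `[-1, 1]%classic].

Definition Cr {R : realType} (r : nat) (f : R -> R) : Prop :=
  (forall k x, (k < r)%N -> derivable (derive1n k f) x 1) /\
  continuous (derive1n r f).

(* Write r = 2k + 3 and let phi x = x^(2k) (1 - x^2)^(2k+5): it is nonnegative on [-1, 1],
   vanishes to order 2k + 5 at -1 and 1, and its Taylor polynomial of degree r - 1 at 0
   is x^(2k) - (2k+5) x^(2k+2).  For 0 < t < 1/2 the function f equal to t^r phi (x / t)
   on [-t, t] and to 0 elsewhere is C^r, nonnegative, zero on [-1, -1/2], and
   |f^(r)| is bounded by the sum of the absolute coefficients of phi^(r), whatever t.
   A polynomial P with the same derivatives of order < r at 0 is P = T + x^r Q with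
   T(t) = T(-t) = -(2k+4) t^r, so P(t) + P(-t) >= 0 forces Q(t) - Q(-t) >= 2(2k+4).
   If moreover |f - P| <= A |f^(r)|, then Q, of degree < n + 1 - r, is bounded at
   n + 1 - r fixed nodes of [1/2, 1], where f = 0; Lagrange interpolation at these nodes
   bounds Q(t) - Q(-t) by a constant times t, a contradiction for t small enough. *)

From HB Require Import structures.
From mathcomp Require Import all_boot all_order all_algebra.
From mathcomp Require Import all_classical all_reals all_analysis.
From mathcomp Require Import ring lra zify.
Import Order.TTheory GRing.Theory Num.Theory.
Import numFieldNormedType.Exports.
Local Open Scope classical_set_scope.
Local Open Scope ring_scope.
Set Implicit Arguments. Unset Strict Implicit. Unset Printing Implicit Defensive.

Section PolyNorm1.
Context {R : realFieldType}.
Implicit Types (p : {poly R}) (x t : R).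

Definition poly_norm1 p := \sum_(i < size p) `|p`_i|.

Lemma poly_norm1_ge0 p : 0 <= poly_norm1 p.
Proof. by apply: sumr_ge0 => i _; exact: normr_ge0. Qed.

Lemma norm_horner_le_norm1 p x : `|x| <= 1 -> `|p.[x]| <= poly_norm1 p.
Proof.
move=> x1; rewrite horner_coef; apply: (le_trans (ler_norm_sum _ _ _)).
apply: ler_sum => i _; rewrite normrM normrX.
by rewrite ler_piMr ?normr_ge0 // exprn_ile1.
Qed.

Lemma norm_horner_odd_le p t : 0 <= t <= 1 ->
  `|p.[t] - p.[- t]| <= 2 * t * poly_norm1 p.
Proof.
move=> /andP[t0 t1]; rewrite !horner_coef -sumrB.
apply: (le_trans (ler_norm_sum _ _ _)).
rewrite /poly_norm1 mulr_sumr; apply: ler_sum => i _.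
rewrite -mulrBr normrM mulrC ler_wpM2r //.
case: (nat_of_ord i) => [|j]; first by rewrite !expr0 subrr normr0 mulr_ge0.
rewrite exprNn; apply: (le_trans (ler_normB _ _)).
rewrite normrM !normrX normrN1 expr1n mul1r ger0_norm //.
have : t ^+ j.+1 <= t by rewrite exprS ler_piMr // exprn_ile1.
lra.
Qed.

End PolyNorm1.

Section CompScaleX.
Context {R : comNzRingType}.
Implicit Types (p : {poly R}) (c : R).

Lemma derivn_comp_scaleX j p c :
  (p \Po (c *: 'X))^`(j) = c ^+ j *: (p^`(j) \Po (c *: 'X)).
Proof.
elim: j => [|j IHj]; first by rewrite expr0 scale1r.
rewrite derivnS IHj derivZ deriv_comp derivZ derivX -mul_polyC.
by rewrite -derivnS mul_polyC -scalerAr mulr1 scalerA -exprSr.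
Qed.

Lemma coef_comp_scaleX p c i : (p \Po (c *: 'X))`_i = c ^+ i * p`_i.
Proof.
elim/poly_ind: p i => [|p a IHp] i; first by rewrite comp_poly0 !coef0 mulr0.
rewrite comp_polyD comp_polyC comp_polyM comp_polyX !coefD !coefC.
rewrite -scalerAr coefZ !coefMX.
case: i => [|i] /=; first by rewrite mulr0 expr0 mul1r.
by rewrite !addr0 IHp exprS mulrA.
Qed.

Lemma take_poly_comp_scaleX n p c :
  take_poly n (p \Po (c *: 'X)) = take_poly n p \Po (c *: 'X).
Proof.
apply/polyP => i; rewrite coef_take_poly !coef_comp_scaleX coef_take_poly.
by case: ifP; rewrite ?mulr0.
Qed.

End CompScaleX.

Lemma derivn_exp_XsubC_mul_root (R : comNzRingType) (a : R) m q j : (j < m)%N ->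
  ((('X - a%:P) ^+ m * q)^`(j)).[a] = 0.
Proof.
have factor i : (i <= m)%N ->
    exists q', (('X - a%:P) ^+ m * q)^`(i) = ('X - a%:P) ^+ (m - i) * q'.
  elim: i => [|i IHi] im; first by exists q; rewrite subn0.
  rewrite derivnS; have [q' ->] := IHi (ltnW im); rewrite -(subnSK im).
  exists ((m - i.+1).+1%:R *: q' + ('X - a%:P) * q'^`()).
  rewrite derivM deriv_exp derivXsubC mul1r /=.
  by rewrite mulrDr -scalerAr scaler_nat -mulrnAl mulrA -exprSr.
move=> jm; have [q' ->] := factor j (ltnW jm).
by rewrite hornerM horner_exp hornerXsubC subrr expr0n subn_eq0 leqNgt jm mul0r.
Qed.

Lemma take_poly_eq_derivn0 (R : numDomainType) r (p q : {poly R}) :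
  (forall i, (i < r)%N -> p^`(i).[0] = q^`(i).[0]) ->
  take_poly r p = take_poly r q.
Proof.
move=> pq; apply/polyP => i; rewrite !coef_take_poly; case: ifP => // ir.
apply/eqP; rewrite -(eqr_pMn2r (fact_gt0 i)); apply/eqP.
by have := pq i ir; rewrite !horner_coef0 !coef_derivn addn0 ffactnn.
Qed.

Lemma exp_1subX2_expansion (R : comNzRingType) m : exists q : {poly R},
  (1 - 'X^2) ^+ m = 1 - m%:R%:P * 'X^2 + q * 'X^4.
Proof.
elim: m => [|m [q IHm]]; first by exists 0; rewrite expr0 !mul0r subr0 addr0.
exists (m%:R%:P + q - q * 'X^2).
by rewrite exprS IHm -natr1 polyCD; ring.
Qed.

Section BumpPoly.
Context {R : realFieldType} (k : nat).

Definition bump_poly : {poly R} := 'X^(2 * k) * (1 - 'X^2) ^+ (2 * k + 5).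

Lemma bump_poly_ge0 u : `|u| <= 1 -> 0 <= bump_poly.[u].
Proof.
move=> u1; rewrite !hornerE; apply: mulr_ge0; first by rewrite exprM exprn_ge0 ?sqr_ge0.
by rewrite exprn_ge0 // subr_ge0 -real_normK ?num_real // exprn_ile1.
Qed.

Lemma bump_poly_flat j : (j < 2 * k + 5)%N ->
  bump_poly^`(j).[1] = 0 /\ bump_poly^`(j).[-1] = 0.
Proof.
move=> jm; have bumpE c s : 1 - 'X^2 = ('X - c%:P) * s ->
    bump_poly = ('X - c%:P) ^+ (2 * k + 5) * ('X^(2 * k) * s ^+ (2 * k + 5)).
  by move=> e; rewrite /bump_poly e exprMn mulrCA.
split.
  by rewrite (bumpE 1 (- ('X + 1))) ?derivn_exp_XsubC_mul_root // polyC1; ring.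
by rewrite (bumpE (-1) (1 - 'X)) ?derivn_exp_XsubC_mul_root // polyCN polyC1; ring.
Qed.

Lemma take_bump_poly :
  take_poly (2 * k + 3) bump_poly = 'X^(2 * k) - (2 * k + 5)%:R%:P * 'X^(2 * k + 2).
Proof.
have [q qE] := exp_1subX2_expansion R (2 * k + 5).
have -> : bump_poly = 'X^(2 * k) - (2 * k + 5)%:R%:P * 'X^(2 * k + 2)
    + q * 'X * 'X^(2 * k + 3) by rewrite /bump_poly qE !exprD; ring.
rewrite take_polyDMXn // (leq_trans (size_polyD _ _)) // geq_max size_polyXn size_polyN.
rewrite mul_polyC (leq_trans (size_scale_leq _ _)) ?size_polyXn //; lia.
Qed.

End BumpPoly.

Section LagrangeOdd.
Context {R : realFieldType} (x : nat -> R).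
Hypothesis x_inj : injective x.

Definition lagrange_norm1 N := \sum_(i < N) poly_norm1 (tnth (lagrange N x) i : {poly R}).

Lemma horner_odd_le_lagrange N (Q : {poly R}) t W : (size Q <= N)%N -> 0 <= t <= 1 ->
  (forall i, (i < N)%N -> `|Q.[x i]| <= W) ->
  Q.[t] - Q.[- t] <= 2 * t * W * lagrange_norm1 N.
Proof.
case: N => [|N] sQ t01 QW.
  rewrite size_poly_leq0 in sQ.
  by rewrite (eqP sQ) !horner0 subrr /lagrange_norm1 big_ord0 mulr0.
rewrite (lagrange_gen _ x_inj sQ) // !horner_sum -sumrB /lagrange_norm1 mulr_sumr.
apply: ler_sum => i _; set L := tnth _ i.
rewrite !hornerM !hornerC -mulrBr; apply: (le_trans (ler_norm _)); rewrite normrM.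
rewrite (_ : 2 * t * W * _ = W * (2 * t * poly_norm1 L)); last by ring.
exact: ler_pM (normr_ge0 _) (normr_ge0 _) (QW i (ltn_ord i)) (norm_horner_odd_le _ t01).
Qed.

End LagrangeOdd.

Section PolyRestrict.
Context {R : realType}.
Implicit Types (p q : {poly R}) (a b c x : R).

Lemma restrict_hornerE p a b x :
  (horner p \_ `[a, b]) x = if a <= x <= b then p.[x] else 0.
Proof. by rewrite patchE mem_setE in_itv. Qed.

Lemma norm_restrict_horner_le p a b x : `|(horner p \_ `[a, b]) x| <= `|p.[x]|.
Proof. by rewrite restrict_hornerE; case: ifP; rewrite ?normr0. Qed.

Lemma double_root_factor p c : p.[c] = 0 -> p^`().[c] = 0 ->
  exists q, p = q * ('X - c%:P) ^+ 2.
Proof.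
move=> pc0 dpc0; have /factor_theorem [q1 pE] : root p c by exact/rootP.
have /factor_theorem [q q1E] : root q1 c.
  by apply/rootP; move: dpc0; rewrite pE derivM derivXsubC mulr1 !hornerE subrr mulr0 add0r.
by exists q; rewrite pE q1E -mulrA -expr2.
Qed.

Lemma is_derive_dominated_double_root (F : R -> R) p c :
  p.[c] = 0 -> p^`().[c] = 0 -> (forall x, `|F x| <= `|p.[x]|) ->
  is_derive c 1 F 0.
Proof.
move=> pc0 dpc0 Fp; have [q pE] := double_root_factor pc0 dpc0.
have Fc0 : F c = 0.
  by apply/normr0_eq0/eqP; rewrite -normr_le0 normr_id; move: (Fp c); rewrite pc0 normr0.
(* The difference quotient [F (c + h) / h] is dominated by [G h = q (c + h) * h]. *)
pose G := (q \Po ('X + c%:P)) * 'X.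
have G0 : horner G @ 0 --> 0.
  have G00 : G.[0] = 0 by rewrite hornerM hornerX mulr0.
  by rewrite -[X in _ --> X]G00; exact: continuous_horner.
have quot0 : (fun h => h^-1 *: ((F \o shift c) (h *: 1) - F c)) @ 0^' --> 0.
  apply/cvgr0Pnorm_lt => e e0.
  have G0' : horner G @ 0^' --> 0 by exact: cvg_within_filter.
  have Ge := cvgr0_norm_lt _ G0' _ e0.
  near=> h.
  have hn0 : h != 0 by near: h; exact: nbhs_dnbhs_neq.
  apply: (@le_lt_trans _ _ `|G.[h]|); last by near: h; exact: Ge.
  rewrite /= Fc0 subr0 scaler1 normrM normfV ler_pdivrMl ?normr_gt0 //.
  apply: (le_trans (Fp _)).
  by rewrite pE /G !hornerE horner_comp !hornerE addrK normrM [`|h| * _]mulrC.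
apply: DeriveDef; first by apply/cvg_ex; exists 0.
exact: cvg_lim.
Unshelve. all: by end_near.
Qed.

Lemma restrict_horner_out p a b x : (x < a) || (b < x) ->
  (horner p \_ `[a, b]) x = 0.
Proof.
by rewrite restrict_hornerE => /orP[xa|bx]; rewrite ifF // ?(lt_geF xa) ?(lt_geF bx) ?andbF.
Qed.

Lemma is_derive_restrict_horner p a b x : a < b ->
  p.[a] = 0 -> p.[b] = 0 -> p^`().[a] = 0 -> p^`().[b] = 0 ->
  is_derive x 1 (horner p \_ `[a, b]) ((horner p^`() \_ `[a, b]) x).
Proof.
move=> ab pa0 pb0 dpa0 dpb0; have dom := norm_restrict_horner_le p a b.
have [xa|ax] := ltrP x a.
  rewrite restrict_horner_out ?xa //.
  apply: (near_eq_is_derive _ (is_derive_cst 0 x 1)).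
  by near=> y; rewrite restrict_horner_out // (near (lt_nbhsl xa) y).
have [bx|xb] := ltrP b x.
  rewrite restrict_horner_out ?bx ?orbT //.
  apply: (near_eq_is_derive _ (is_derive_cst 0 x 1)).
  near=> y; rewrite restrict_horner_out //; apply/orP; right; near: y; exact: lt_nbhsr.
rewrite restrict_hornerE ax xb.
have [->|xna] := eqVneq x a.
  by rewrite dpa0; exact: is_derive_dominated_double_root pa0 dpa0 dom.
have [->|xnb] := eqVneq x b.
  by rewrite dpb0; exact: is_derive_dominated_double_root pb0 dpb0 dom.
have ax' : a < x by rewrite lt_def xna ax.
have xb' : x < b by rewrite lt_def eq_sym xnb xb.
apply: (near_eq_is_derive _ (is_derive_poly p x)).
near=> y; rewrite restrict_hornerE ifT //.
by rewrite !ltW ?(near (lt_nbhsr ax') y) ?(near (lt_nbhsl xb') y).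
Unshelve. all: by end_near.
Qed.

Lemma derive1n_restrict_horner p a b j : a < b ->
  (forall i, (i <= j)%N -> p^`(i).[a] = 0 /\ p^`(i).[b] = 0) ->
  derive1n j (horner p \_ `[a, b]) = horner p^`(j) \_ `[a, b].
Proof.
elim: j => [//|j IHj] ab flat.
have [pa0 pb0] := flat j (leqnSn j).
have [dpa0 dpb0] := flat j.+1 (leqnn _); rewrite derivnS in dpa0 dpb0.
rewrite derive1nS IHj // => [|i ij]; last exact/flat/(leq_trans ij).
apply/funext => x; rewrite derivnS derive1E.
by have [_ ->] := is_derive_restrict_horner x ab pa0 pb0 dpa0 dpb0.
Qed.

Lemma Cr_restrict_horner r p a b : a < b ->
  (forall i, (i <= r.+1)%N -> p^`(i).[a] = 0 /\ p^`(i).[b] = 0) ->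
  Cr r (horner p \_ `[a, b]).
Proof.
move=> ab flat.
have derivable_j j x : (j <= r)%N -> derivable (horner p^`(j) \_ `[a, b]) x 1.
  move=> jr; have [pa0 pb0] := flat j (leq_trans jr (leqnSn r)).
  have [dpa0 dpb0] := flat j.+1 jr; rewrite derivnS in dpa0 dpb0.
  by have [] := is_derive_restrict_horner x ab pa0 pb0 dpa0 dpb0.
have derive1nE j : (j <= r)%N -> derive1n j (horner p \_ `[a, b]) = horner p^`(j) \_ `[a, b].
  move=> jr; apply: derive1n_restrict_horner => // i ij.
  exact/flat/(leq_trans ij)/(leq_trans jr).
split=> [j x jr|x].
  by rewrite derive1nE ?(ltnW jr) //; apply/derivable_j/ltnW.
rewrite derive1nE //; apply: differentiable_continuous.
by rewrite -derivable1_diffP; exact: derivable_j.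
Qed.
End PolyRestrict.

Section SupNorm.
Context {R : realType}.
Implicit Types (g : R -> R) (M x : R).

Lemma supnorm_le g M : (forall x, -1 <= x <= 1 -> `|g x| <= M) -> supnorm g <= M.
Proof.
move=> gM; apply: ge_sup; first by exists `|g 0|, 0; rewrite //= in_itv /= lerN10 ler01.
by move=> _ [x /= x11 <-]; apply: gM; rewrite in_itv in x11.
Qed.

Lemma norm_le_supnorm g M x : (forall y, -1 <= y <= 1 -> `|g y| <= M) ->
  -1 <= x <= 1 -> `|g x| <= supnorm g.
Proof.
move=> gM x11; apply: sup_upper_bound; last by exists x; rewrite //= in_itv.
split; first by exists `|g 0|, 0; rewrite //= in_itv /= lerN10 ler01.
by exists M => _ [y /= y11 <-]; apply: gM; rewrite in_itv in y11.
Qed.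

End SupNorm.

Definition node {R : realFieldType} (i : nat) : R := 2^-1 + i.+2%:R^-1.

Lemma node_inj {R : realFieldType} : injective (@node R).
Proof. by move=> i j /addrI /invr_inj /eqP; rewrite eqr_nat !eqSS => /eqP. Qed.

Lemma node_itv {R : realFieldType} i : 2^-1 <= @node R i <= 1.
Proof.
have : 0 <= (i.+2%:R : R)^-1 <= 2^-1.
  by rewrite invr_ge0 ler0n lef_pV2 ?posrE ?ltr0Sn // ler_nat.
rewrite /node; move: (i.+2%:R^-1 : R) => x; lra.
Qed.

Section ScaledBump.
Context {R : realType} (k : nat) (t : R).
Hypotheses (t_gt0 : 0 < t) (t_lt : t < 2^-1).

Local Notation r := (2 * k + 3)%N.
Local Notation m := ((2 * k + 5)%:R : R).

Definition scaled_bump_poly : {poly R} := t ^+ r *: (bump_poly k \Po (t^-1 *: 'X)).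

Definition scaled_bump : R -> R := horner scaled_bump_poly \_ `[- t, t].

Lemma horner_derivn_scaled_bump_poly j x : scaled_bump_poly^`(j).[x] =
  t ^+ r * t^-1 ^+ j * (bump_poly k)^`(j).[t^-1 * x].
Proof.
by rewrite derivnZ derivn_comp_scaleX !hornerZ horner_comp hornerZ hornerX mulrA.
Qed.

Lemma scaled_bump_poly_flat j : (j <= r.+1)%N ->
  scaled_bump_poly^`(j).[- t] = 0 /\ scaled_bump_poly^`(j).[t] = 0.
Proof.
move=> jr; have [flat1 flatN1] := @bump_poly_flat R k j ltac:(lia).
by rewrite !horner_derivn_scaled_bump_poly mulrN mulVf ?gt_eqF // flat1 flatN1 !mulr0.
Qed.

Lemma norm_scale_le1 x : - t <= x <= t -> `|t^-1 * x| <= 1.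
Proof.
by move=> tx; rewrite normrM gtr0_norm ?invr_gt0 // mulrC ler_pdivrMr // mul1r ler_norml.
Qed.

Lemma derive1n_scaled_bump j : (j <= r.+1)%N ->
  derive1n j scaled_bump = horner scaled_bump_poly^`(j) \_ `[- t, t].
Proof.
move=> jr; apply: derive1n_restrict_horner; first by have := t_gt0; lra.
by move=> i ij; apply: scaled_bump_poly_flat; exact: leq_trans ij jr.
Qed.

Lemma Cr_scaled_bump : Cr r scaled_bump.
Proof. by apply: Cr_restrict_horner; [have := t_gt0; lra | exact: scaled_bump_poly_flat]. Qed.

Lemma scaled_bump_out x : (x < - t) || (t < x) -> scaled_bump x = 0.
Proof. exact: restrict_horner_out. Qed.

Lemma scaled_bump_ge0 x : 0 <= scaled_bump x.
Proof.
rewrite /scaled_bump restrict_hornerE; case: ifP => // tx.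
have := horner_derivn_scaled_bump_poly 0 x; rewrite !derivn0 expr0 mulr1 => ->.
by rewrite mulr_ge0 ?exprn_ge0 ?(ltW t_gt0) // bump_poly_ge0 // norm_scale_le1.
Qed.

Lemma supnorm_derive_scaled_bump :
  supnorm (derive1n r scaled_bump) <= poly_norm1 ((bump_poly k)^`(r)).
Proof.
rewrite derive1n_scaled_bump //; apply: supnorm_le => x _.
rewrite restrict_hornerE; case: ifP => [tx|_]; last by rewrite normr0 poly_norm1_ge0.
rewrite horner_derivn_scaled_bump_poly -exprMn mulfV ?gt_eqF // expr1n mul1r.
exact/norm_horner_le_norm1/norm_scale_le1.
Qed.

Lemma horner_take_scaled_bump_poly x : (take_poly r scaled_bump_poly).[x] =
  t ^+ 3 * x ^+ (2 * k) - m * t * x ^+ (2 * k + 2).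
Proof.
rewrite take_polyZ take_poly_comp_scaleX take_bump_poly hornerZ horner_comp !hornerE.
rewrite !exprMn !exprVn !exprD; field.
by rewrite expf_neq0 gt_eqF.
Qed.

Section Approximant.
Variable P : {poly R}.
Hypothesis P_taylor : take_poly r P = take_poly r scaled_bump_poly.

Local Notation Q := (drop_poly r P).

Lemma horner_scaled_bump_approximant x :
  P.[x] = x ^+ (2 * k) * (t ^+ 3 - m * t * x ^+ 2 + Q.[x] * x ^+ 3).
Proof.
rewrite -{1}(poly_take_drop r P) hornerD hornerM hornerXn P_taylor.
by rewrite horner_take_scaled_bump_poly !(exprD x (2 * k)); ring.
Qed.

Lemma drop_poly_odd_gap : 0 <= P.[t] -> 0 <= P.[- t] -> 2 * (m - 1) <= Q.[t] - Q.[- t].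
Proof.
have a_gt0 : 0 < (t ^+ 2) ^+ k by rewrite !exprn_gt0.
rewrite !horner_scaled_bump_approximant !(exprM _ 2 k) !sqrrN (exprS (- t) 2) sqrrN.
rewrite !(pmulr_rge0 _ a_gt0) => Pt PNt.
have t3_gt0 : 0 < t ^+ 3 by rewrite exprn_gt0.
nra.
Qed.

Lemma drop_poly_node_bound M y : 2^-1 <= y <= 1 ->
  `|scaled_bump y - P.[y]| <= M -> `|Q.[y]| <= 2 ^+ r * (M + 1 + m).
Proof.
move=> y_itv; have [y_ge y_le] := andP y_itv.
have t_lt_y : t < y by apply: lt_le_trans t_lt y_ge.
rewrite scaled_bump_out ?t_lt_y ?orbT // sub0r normrN horner_scaled_bump_approximant.
set a := y ^+ (2 * k) => PM.
have y_gt0 : 0 < y by apply: lt_le_trans y_ge; rewrite invr_gt0.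
have a01 : 0 <= a <= 1 by rewrite /a exprn_ge0 ?exprn_ile1 ?(ltW y_gt0).
have t_le1 : t <= 1 by have := t_lt; lra.
have u01 : 0 <= t ^+ 3 <= 1 by rewrite exprn_ge0 ?exprn_ile1 ?(ltW t_gt0).
have v01 : 0 <= t * y ^+ 2 <= 1.
  rewrite mulr_ge0 ?exprn_ge0 ?(ltW t_gt0) ?(ltW y_gt0) //=.
  by apply: mulr_ile1; rewrite ?exprn_ge0 ?exprn_ile1 ?(ltW t_gt0) ?(ltW y_gt0).
have m_ge0 : 0 <= m by rewrite ler0n.
have T_le : `|a * (t ^+ 3 - m * t * y ^+ 2)| <= 1 + m.
  have [a_ge0 a_le1] := andP a01.
  have [u_ge0 u_le1] := andP u01; have [v_ge0 v_le1] := andP v01.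
  have au : 0 <= a * t ^+ 3 <= 1 by rewrite mulr_ge0 //= mulr_ile1.
  have av : 0 <= a * (t * y ^+ 2) <= 1 by rewrite mulr_ge0 //= mulr_ile1.
  rewrite (_ : a * _ = a * t ^+ 3 - m * (a * (t * y ^+ 2))); last by ring.
  rewrite ler_norml; move: au av; set au := a * _; set av := a * _; nra.
have QyP : `|Q.[y]| * (a * y ^+ 3) <= M + (1 + m).
  rewrite -[a * _]ger0_norm ?mulr_ge0 ?exprn_ge0 ?(ltW y_gt0) // -normrM.
  rewrite (_ : Q.[y] * _ = a * (t ^+ 3 - m * t * y ^+ 2 + Q.[y] * y ^+ 3)
    - a * (t ^+ 3 - m * t * y ^+ 2)); last by ring.
  exact: le_trans (ler_normB _ _) (lerD PM T_le).
have ay : 2^-1 ^+ r <= a * y ^+ 3.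
  by rewrite /a -exprD; apply: lerXn2r; rewrite // nnegrE ?invr_ge0 ?(ltW y_gt0).
rewrite mulrC -ler_pdivrMr ?exprn_gt0 // -exprVn -addrA.
by apply: le_trans QyP; rewrite ler_wpM2l.
Qed.

End Approximant.

Lemma supnorm_sub_scaled_bump_gt A N (P : {poly R}) :
  0 < A -> (size P <= N + r)%N ->
  (forall x, -(1/2) <= x <= 1/2 -> 0 <= P.[x]) ->
  (forall i, (i < r)%N -> P^`(i).[0] = derive1n i scaled_bump 0) ->
  t * (2 ^+ r * (A * poly_norm1 ((bump_poly k)^`(r)) + 1 + m)) * lagrange_norm1 node N < 1 ->
  A * supnorm (derive1n r scaled_bump) < supnorm (fun x => scaled_bump x - P.[x]).
Proof.
move=> A_gt0 sP P_ge0 P_der small; rewrite ltNge; apply/negP => sup_le.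
set B := poly_norm1 _ in small; set W := 2 ^+ r * _ in small.
have P_taylor : take_poly r P = take_poly r scaled_bump_poly.
  apply: take_poly_eq_derivn0 => i ir; rewrite P_der // (@derive1n_scaled_bump i); last by lia.
  by rewrite restrict_hornerE oppr_le0 (ltW t_gt0).
have diff_le y : -1 <= y <= 1 -> `|scaled_bump y - P.[y]| <= A * B.
  move=> y11; apply: le_trans (le_trans sup_le _); last first.
    by rewrite ler_pM2l //; exact: supnorm_derive_scaled_bump.
  apply: (norm_le_supnorm (M := poly_norm1 scaled_bump_poly + poly_norm1 P)) y11 => z.
  rewrite -ler_norml => z1; apply: le_trans (ler_normB _ _) (lerD _ _).
    exact: le_trans (norm_restrict_horner_le _ _ _ _) (norm_horner_le_norm1 _ z1).
  exact: norm_horner_le_norm1.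
have t_half : -(1/2) <= t <= 1/2 /\ -(1/2) <= - t <= 1/2.
  by rewrite div1r; have := t_gt0; have := t_lt; lra.
have gap := drop_poly_odd_gap P_taylor (P_ge0 _ t_half.1) (P_ge0 _ t_half.2).
have sQ : (size (drop_poly r P) <= N)%N by rewrite size_drop_poly leq_subLR addnC.
have t01 : 0 <= t <= 1 by have := t_gt0; have := t_lt; lra.
have Q_nodes i : (i < N)%N -> `|(drop_poly r P).[node i]| <= W.
  move=> _; rewrite /W; apply: (drop_poly_node_bound P_taylor (node_itv i)).
  by apply: diff_le; have := node_itv (R := R) i; lra.
have := horner_odd_le_lagrange node_inj sQ t01 Q_nodes.
have m_ge5 : 5 <= m by rewrite ler_nat leq_addl.
lra.
Qed.

End ScaledBump.

Unset Implicit Arguments. Set Strict Implicit.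

Theorem lemma3p8 (R : realType) (r n : nat) (A : R) :
  (3 <= r)%N -> odd r -> (r.-1 <= n)%N -> 0 < A ->
  exists f : R -> R,
    [/\ Cr r f,
        (forall x : R, -1 <= x <= -(1/2) -> f x = 0),
        (forall x : R, -1 <= x <= 1 -> 0 <= f x) &
        forall P : {poly R},
          (size P <= n.+1)%N ->
          (forall x : R, -(1/2) <= x <= 1/2 -> 0 <= P.[x]) ->
          (forall i : nat, (i < r)%N -> (derivn i P).[0] = derive1n i f 0) ->
          supnorm (fun x => f x - P.[x]) > A * supnorm (derive1n r f)].
Proof.
move=> r_ge3 r_odd r_le_n A_gt0.
have [k rE] : exists k, r = (2 * k + 3)%N.
  by exists (r./2).-1; move: (odd_double_half r); rewrite r_odd; lia.
subst r.
set B := poly_norm1 ((@bump_poly R k)^`(2 * k + 3)).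
set W := 2 ^+ (2 * k + 3) * (A * B + 1 + (2 * k + 5)%:R).
set C := lagrange_norm1 (@node R) (n.+1 - (2 * k + 3)).
have W_ge0 : 0 <= W.
  by rewrite mulr_ge0 ?exprn_ge0 // !addr_ge0 ?ler0n // mulr_ge0 ?poly_norm1_ge0 // ltW.
have C_ge0 : 0 <= C by apply: sumr_ge0 => i _; exact: poly_norm1_ge0.
have WC_ge0 := mulr_ge0 W_ge0 C_ge0.
pose t := (4 + W * C)^-1.
have t_gt0 : 0 < t by rewrite invr_gt0; lra.
have t_lt : t < 2^-1 by rewrite ltf_pV2 ?posrE; lra.
have small : t * W * C < 1 by rewrite -mulrA mulrC ltr_pdivrMr; lra.
exists (scaled_bump k t); split.
- exact: Cr_scaled_bump.
- move=> x /andP[_ x_le]; apply: scaled_bump_out; rewrite div1r in x_le.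
  by apply/orP; left; lra.
- by move=> x _; exact: scaled_bump_ge0.
- move=> P sP P_ge0 P_der.
  apply: (supnorm_sub_scaled_bump_gt t_gt0 t_lt A_gt0 _ P_ge0 P_der small).
  by rewrite subnK //; lia.
Qed.
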